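(* Let $(A,*,\odot)$ be a $\mathrm{BiCom}$-algebra and let $d$ be a linear map on $A$ which is a derivation with respect to both $*$ and $\odot$. Define $x\star y=d(x)\odot y$. Then $(A,*,\star)$ is a $\mathrm{GD}^!$-algebra.
   Context: A $\mathrm{BiCom}$-algebra is a vector space with two bilinear operations $*$ and $\odot$, each associative and commutative, satisfying $(x\odot y)*z=x\odot(y*z)$. A $\mathrm{GD}^!$-algebra is a vector space with two bilinear operations $*$ and $\star$ such that $*$ is associative and commutative, and $(x\star y)\star z-x\star(y\star z)=(x\star z)\star y-x\star(z\star y)$, $x\star(y\star z)=y\star(x\star z)$, $x\star(y*z)=(x\star y)*z$, $x\star(y*z)+y\star(x*z)=(x*y)\star z$. *)

From HB Require Import structures.
From mathcomp Require Import all_boot all_order all_algebra.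
Set Implicit Arguments. Unset Strict Implicit. Unset Printing Implicit Defensive.
Import GRing.Theory.
Local Open Scope ring_scope.

Definition bilinear_op (K : fieldType) (V : lmodType K) (m : V -> V -> V) : Prop :=
  (forall a x y z, m (a *: x + y) z = a *: m x z + m y z) /\
  (forall a x y z, m x (a *: y + z) = a *: m x y + m x z).

Definition linear_map (K : fieldType) (V : lmodType K) (d : V -> V) : Prop :=
  forall a x y, d (a *: x + y) = a *: d x + d y.

Definition assoc_op (V : Type) (m : V -> V -> V) : Prop :=
  forall x y z, m (m x y) z = m x (m y z).

Definition comm_op (V : Type) (m : V -> V -> V) : Prop :=
  forall x y, m x y = m y x.

Definition BiCom_algebra (K : fieldType) (V : lmodType K)
    (mul odot : V -> V -> V) : Prop :=
  bilinear_op mul /\ bilinear_op odot /\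
  assoc_op mul /\ comm_op mul /\
  assoc_op odot /\ comm_op odot /\
  (forall x y z, mul (odot x y) z = odot x (mul y z)).

Definition GDdual_algebra (K : fieldType) (V : lmodType K)
    (mul star : V -> V -> V) : Prop :=
  bilinear_op mul /\ bilinear_op star /\
  assoc_op mul /\ comm_op mul /\
  (forall x y z, star (star x y) z - star x (star y z)
                 = star (star x z) y - star x (star z y)) /\
  (forall x y z, star x (star y z) = star y (star x z)) /\
  (forall x y z, star x (mul y z) = mul (star x y) z) /\
  (forall x y z, star x (mul y z) + star y (mul x z) = star (mul x y) z).

Definition derivation (V : Type) (plus : V -> V -> V) (m : V -> V -> V) (d : V -> V) : Prop :=
  forall x y, d (m x y) = plus (m (d x) y) (m x (d y)).

From HB Require Import structures.
From mathcomp Require Import all_boot all_order all_algebra.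
Local Open Scope ring_scope.
Import GRing.Theory.

(* Let (A, *, .) be a BiCom-algebra and d a linear map that is a derivation
   for both products; put x # y := d x . y.  The proof checks the axioms of a
   GD^!-algebra for (A, *, #) one at a time, each from the least structure it
   needs:
   - # is bilinear because . is bilinear and d is linear;
   - the left-symmetry x # (y # z) = y # (x # z) only uses that . is
     associative and commutative;
   - the associator identity follows from the Leibniz rule for d on ., which
     makes (x # y) # z - x # (y # z) = d d x . y . z symmetric in y and z;
   - x # (y * z) = (x # y) * z is the BiCom compatibility itself;
   - the last identity uses the Leibniz rule for d on * together with the
     exchange law (a * b) . c = a . (b * c), a consequence of the BiCom axioms
     proved first. *)

Lemma bilinear_addl (K : fieldType) (V : lmodType K) (m : V -> V -> V) :
  bilinear_op m -> forall u v z, m (u + v) z = m u z + m v z.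
Proof. by move=> [ml _] u v z; have := ml 1 u v z; rewrite !scale1r. Qed.

Lemma bilinear_precomp (K : fieldType) (V : lmodType K)
    (m : V -> V -> V) (d : V -> V) :
  bilinear_op m -> linear_map d -> bilinear_op (fun x y => m (d x) y).
Proof.
move=> [ml mr] dlin; split=> a x y z /=; last exact: mr.
by rewrite dlin ml.
Qed.

Lemma bicom_exchange (V : Type) (mul odot : V -> V -> V) :
  comm_op mul -> comm_op odot ->
  (forall x y z, mul (odot x y) z = odot x (mul y z)) ->
  forall a b c, odot (mul a b) c = odot a (mul b c).
Proof.
move=> mulC odotC compat a b c.
by rewrite odotC -compat (odotC c a) compat (mulC c b).
Qed.

Lemma star_left_symmetric (V : Type) (odot : V -> V -> V) (d : V -> V) :
  assoc_op odot -> comm_op odot ->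
  forall x y z, odot (d x) (odot (d y) z) = odot (d y) (odot (d x) z).
Proof. by move=> odotA odotC x y z; rewrite -!odotA (odotC (d x)). Qed.

(* Associator identity for #: by the Leibniz rule the associator
   (x # y) # z - x # (y # z) equals d d x . y . z, which is symmetric in
   y and z. *)
Lemma star_associator_symmetric (V : zmodType) (odot : V -> V -> V)
    (d : V -> V) :
  assoc_op odot -> comm_op odot ->
  (forall u v z, odot (u + v) z = odot u z + odot v z) ->
  derivation +%R odot d ->
  forall x y z,
    odot (d (odot (d x) y)) z - odot (d x) (odot (d y) z)
    = odot (d (odot (d x) z)) y - odot (d x) (odot (d z) y).
Proof.
move=> odotA odotC odotDl dodot x y z.
have associator : forall u v,
    odot (d (odot (d x) u)) v - odot (d x) (odot (d u) v)
    = odot (d (d x)) (odot u v).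
  by move=> u v; rewrite dodot odotDl !odotA addrK.
by rewrite !associator (odotC y z).
Qed.

Lemma star_mul_leibniz (V : zmodType) (mul odot : V -> V -> V) (d : V -> V) :
  comm_op mul ->
  (forall u v z, odot (u + v) z = odot u z + odot v z) ->
  (forall a b c, odot (mul a b) c = odot a (mul b c)) ->
  derivation +%R mul d ->
  forall x y z,
    odot (d x) (mul y z) + odot (d y) (mul x z) = odot (d (mul x y)) z.
Proof.
move=> mulC odotDl exchange dmul x y z.
by rewrite dmul odotDl (mulC x (d y)) !exchange.
Qed.

Theorem mainTheorem4 (K : fieldType) (V : lmodType K)
    (mul odot : V -> V -> V) (d : V -> V) :
  BiCom_algebra mul odot ->
  linear_map d ->
  derivation +%R mul d ->
  derivation +%R odot d ->
  GDdual_algebra mul (fun x y => odot (d x) y).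
Proof.
move=> [mulB [odotB [mulA [mulC [odotA [odotC compat]]]]]] dlin dmul dodot.
have odotDl := @bilinear_addl K V odot odotB.
have exchange := @bicom_exchange V mul odot mulC odotC compat.
split; first exact: mulB.
split; first exact: bilinear_precomp.
split; first exact: mulA.
split; first exact: mulC.
split; first exact: star_associator_symmetric.
split; first exact: star_left_symmetric.
split; first by move=> x y z; rewrite compat.
exact: star_mul_leibniz.
Qed.
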